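(* For every $s\ge 1$ the sequence $N\mapsto \alpha_{N,s}$ ($N\ge 2$) is non-decreasing: $\alpha_{N,s}\le\alpha_{N+1,s}$ for all $N\ge 2$.
   Context: For $N\ge 2$ and $s\ge 1$, $$\alpha_{N,s} := \inf\left\{\frac{\sum_{1\le j<k\le N}\frac{|x_j|^s+|x_k|^s}{|x_j-x_k|}}{(N-1)\sum_{k=1}^N|x_k|^{s-1}} : x_1,\dots,x_N\in\mathbb{R}^3 \text{ pairwise distinct}\right\},$$ with the convention $|x|^0=1$ (also for $x=0$) when $s=1$. *)

From HB Require Import structures.
From mathcomp Require Import all_boot all_order all_algebra.
From mathcomp Require Import all_classical all_reals.
From mathcomp Require Import exp.
Set Implicit Arguments. Unset Strict Implicit. Unset Printing Implicit Defensive.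
Import Order.TTheory GRing.Theory Num.Theory.
Local Open Scope ring_scope.
Local Open Scope classical_set_scope.

Definition enorm (R : realType) (x : 'rV[R]_3) : R :=
  Num.sqrt (\sum_(i < 3) x ord0 i ^+ 2).

(* The ratio in the definition of alpha_{N,s}.  Powers use powR, for which
   0 `^ 0 = 1 and 0 `^ t = 0 for t <> 0, matching the convention |x|^0 = 1. *)
Definition alpha_ratio (R : realType) (N : nat) (s : R)
    (x : 'I_N -> 'rV[R]_3) : R :=
  (\sum_(j < N) \sum_(k < N | (j < k)%N)
      ((enorm (x j)) `^ s + (enorm (x k)) `^ s) / enorm (x j - x k))
  / ((N.-1)%:R * \sum_(k < N) (enorm (x k)) `^ (s - 1)).

Definition alpha (R : realType) (N : nat) (s : R) : R :=
  inf [set r : R | exists x : 'I_N -> 'rV[R]_3,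
                     injective x /\ r = @alpha_ratio R N s x].

(* Deleting one point of an (N+1)-point configuration leaves an N-point
   configuration, whose ratio is at least alpha_{N,s}.  Averaging over the
   N+1 deleted points, every pair is kept N-1 times in the numerator and
   every point N times in the denominator sum, so the ratio of the full
   configuration is a weighted mean of ratios that are >= alpha_{N,s}. *)
From HB Require Import structures.
From mathcomp Require Import all_boot all_order all_algebra.
From mathcomp Require Import all_classical all_reals.
From mathcomp Require Import exp.
From mathcomp Require Import zify.
Import Order.TTheory GRing.Theory Num.Theory.
Local Open Scope ring_scope.

Lemma bump_ltn h j k : (bump h j < bump h k)%N = (j < k)%N.
Proof. by rewrite /bump; case: leqP; case: leqP; lia. Qed.

Section DeleteOnePoint.
Variables (V : zmodType) (n : nat).

Lemma sum_lift_ord (h : 'I_n.+1 -> V) (i : 'I_n.+1) :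
  \sum_(k < n) h (lift i k) = \sum_(k < n.+1) h k - h i.
Proof. by rewrite (bigD1_ord i) //= addrC addrK. Qed.

Lemma sum_sum_lift_ord (h : 'I_n.+1 -> V) :
  \sum_(i < n.+1) \sum_(k < n) h (lift i k) = (\sum_(k < n.+1) h k) *+ n.
Proof.
under eq_bigr do rewrite sum_lift_ord.
by rewrite sumrB sumr_const card_ord mulrSr addrK.
Qed.

Lemma sum_pairs_lift_ord (g : 'I_n.+1 -> 'I_n.+1 -> V) (i : 'I_n.+1) :
  \sum_(j < n) \sum_(k < n | (j < k)%N) g (lift i j) (lift i k) =
  \sum_(j < n.+1) \sum_(k < n.+1 | (j < k)%N)
     (if (j != i) && (k != i) then g j k else 0).
Proof.
rewrite [RHS](bigD1_ord i) //= [X in _ = X + _]big1 ?add0r => [|k _]; last by rewrite eqxx.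
apply: eq_bigr => j _; rewrite [RHS]big_mkcond (bigD1_ord i) //= eqxx andbF.
rewrite if_same add0r big_mkcond.
by apply: eq_bigr => k _; rewrite bump_ltn !lift_eqF.
Qed.

Lemma sum_sum_pairs_lift_ord (g : 'I_n.+1 -> 'I_n.+1 -> V) :
  \sum_(i < n.+1) \sum_(j < n) \sum_(k < n | (j < k)%N) g (lift i j) (lift i k)
  = (\sum_(j < n.+1) \sum_(k < n.+1 | (j < k)%N) g j k) *+ n.-1.
Proof.
under eq_bigr do rewrite sum_pairs_lift_ord.
rewrite exchange_big -sumrMnl; apply: eq_bigr => j _.
rewrite exchange_big -sumrMnl; apply: eq_bigr => k jk.
have jNk : j != k by apply: contraTneq jk => ->; rewrite ltnn.
rewrite -big_mkcond sumr_const.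
have -> : #|[pred i | (j != i) && (k != i)]| = #|~: [set j; k]|.
  by apply: eq_card => i; rewrite !inE negb_or ![i == _]eq_sym.
by rewrite cardsCs finset.setCK cards2 jNk card_ord subSS subn1.
Qed.

End DeleteOnePoint.

Section Ratio.
Variable R : realType.

Definition pair_energy {n} (s : R) (x : 'I_n -> 'rV[R]_3) : R :=
  \sum_(j < n) \sum_(k < n | (j < k)%N)
     (enorm (x j) `^ s + enorm (x k) `^ s) / enorm (x j - x k).

Definition weight_sum {n} (s : R) (x : 'I_n -> 'rV[R]_3) : R :=
  \sum_(k < n) enorm (x k) `^ (s - 1).

Lemma alpha_ratioE n (s : R) (x : 'I_n -> 'rV[R]_3) :
  alpha_ratio s x = pair_energy s x / (n.-1%:R * weight_sum s x).
Proof. by []. Qed.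

Lemma enorm_gt0 (z : 'rV[R]_3) : z != 0 -> 0 < enorm z.
Proof.
move=> z0; rewrite /enorm sqrtr_gt0 lt_def psumr_eq0 => [|i _]; last exact: sqr_ge0.
rewrite sumr_ge0 ?andbT => [|i _]; last exact: sqr_ge0.
apply: contra z0 => /allP z2; apply/eqP/rowP => i; rewrite mxE.
by apply/eqP; rewrite -sqrf_eq0; apply: z2; rewrite mem_index_enum.
Qed.

Lemma alpha_ratio_ge0 n (s : R) (x : 'I_n -> 'rV[R]_3) : 0 <= alpha_ratio s x.
Proof.
apply: divr_ge0; last by rewrite mulr_ge0 ?sumr_ge0 // => k _; exact: powR_ge0.
apply: sumr_ge0 => j _; apply: sumr_ge0 => k _.
by rewrite divr_ge0 ?addr_ge0 ?powR_ge0 ?sqrtr_ge0.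
Qed.

Lemma alpha_le_ratio n (s : R) (x : 'I_n -> 'rV[R]_3) :
  injective x -> alpha n s <= alpha_ratio s x.
Proof.
move=> xinj; apply: ge_inf; last by exists x.
by exists 0 => r [y [_ ->]]; exact: alpha_ratio_ge0.
Qed.

Lemma weight_sum_gt0 n (s : R) (x : 'I_n.+2 -> 'rV[R]_3) :
  injective x -> 0 < weight_sum s x.
Proof.
move=> xinj.
have [k xk] : exists k, x k != 0.
  have [x0|] := eqVneq (x ord0) 0; last by exists ord0.
  by exists ord_max; rewrite -x0 (inj_eq xinj).
rewrite /weight_sum (bigD1 k) //= ltr_pwDl ?powR_gt0 ?enorm_gt0 //.
by apply: sumr_ge0 => i _; exact: powR_ge0.
Qed.

Lemma alpha_le_ratio_succ n (s : R) (x : 'I_n.+3 -> 'rV[R]_3) :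
  injective x -> alpha n.+2 s <= alpha_ratio s x.
Proof.
move=> xinj; set a := alpha n.+2 s.
have deleted i : a * ((n.+1)%:R * weight_sum s (x \o lift i))
                 <= pair_energy s (x \o lift i).
  have yinj : injective (x \o lift i) by move=> j k /xinj /lift_inj.
  rewrite -ler_pdivlMr ?mulr_gt0 ?weight_sum_gt0 //.
  exact: alpha_le_ratio.
have sum_weights : \sum_(i < n.+3) weight_sum s (x \o lift i) = weight_sum s x *+ n.+2.
  exact: (@sum_sum_lift_ord _ _ (fun k => enorm (x k) `^ (s - 1))).
have sum_energies : \sum_(i < n.+3) pair_energy s (x \o lift i) = pair_energy s x *+ n.+1.
  exact: (@sum_sum_pairs_lift_ord _ _
           (fun j k => (enorm (x j) `^ s + enorm (x k) `^ s) / enorm (x j - x k))).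
have : \sum_(i < n.+3) a * ((n.+1)%:R * weight_sum s (x \o lift i))
        <= \sum_(i < n.+3) pair_energy s (x \o lift i).
  by apply: ler_sum => i _; exact: deleted.
rewrite -mulr_sumr -mulr_sumr sum_weights sum_energies.
have W_gt0 : 0 < weight_sum s x by exact: weight_sum_gt0.
rewrite alpha_ratioE /=; move: W_gt0.
move: (weight_sum s x) (pair_energy s x) => W P W_gt0.
rewrite -[W *+ _]mulr_natr -[P *+ _]mulr_natr ler_pdivlMr ?mulr_gt0 // => averaged.
rewrite -(@ler_pM2r _ (n.+1)%:R) ?ltr0n //; apply: le_trans averaged.
by rewrite [W * _]mulrC mulrAC -!mulrA.
Qed.

End Ratio.

Theorem lemma3p1 (R : realType) (s : R) (N : nat) :
  1 <= s -> (2 <= N)%N -> @alpha R N s <= @alpha R N.+1 s.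
Proof.
move=> _; case: N => [|[|n]] // _.
apply: lb_le_inf; last by move=> r [x [xinj ->]]; exact: alpha_le_ratio_succ.
pose x0 (i : 'I_n.+3) : 'rV[R]_3 := const_mx i%:R.
exists (alpha_ratio s x0), x0; split => // i j /rowP /(_ ord0).
by rewrite !mxE => /eqP; rewrite eqr_nat => /eqP /val_inj.
Qed.
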